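(* Let $\beta>1$ be the positive root of $\beta^2=a\beta+b$ with integers $a\ge b\ge 2$, and let $\mathbb Z_b=\{p/q: p,q\in\mathbb Z,\ \gcd(q,b)=1\}$. Then for all real $c<d$, \[ \overline{\mathbb Z_{\mathrm f}}=\overline{(\mathbb Z_b)_{\mathrm f}}=\overline{(\mathbb Z_b\cap[c,d])_{\mathrm f}}. \]
   Context: Let $K=\mathbb Q(\beta)$. $K_{\mathrm f}=\prod_{\mathfrak p\mid(\beta)}K_{\mathfrak p}$, the product over the prime ideals $\mathfrak p$ of the ring of integers of $K$ dividing the principal ideal $(\beta)$ of the completions $K_{\mathfrak p}$. For $x\in K$, $x_{\mathrm f}\in K_{\mathrm f}$ denotes its diagonal embedding, and for $S\subseteq K$, $\overline{S_{\mathrm f}}$ denotes the closure of $\{x_{\mathrm f}:x\in S\}$ in $K_{\mathrm f}$. *)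

From Stdlib Require Import Reals ZArith.
Open Scope R_scope.

(* K = Q(beta), realised concretely inside R via the real number beta
   (beta > 1 is the positive root of beta^2 = a beta + b). *)
Definition inK (beta x : R) : Prop :=
  exists p r q : Z, q <> 0%Z /\ x = (IZR p + IZR r * beta) / IZR q.

(* A normalized discrete valuation on K: v x is meaningful only for x in K,
   x <> 0 (v 0 = +infinity is handled separately below).
   By Ostrowski these are exactly the v_p for the nonzero primes p of O_K,
   and p | (beta) iff v beta > 0. *)
Definition is_dval (beta : R) (v : R -> Z) : Prop :=
  (forall x y, inK beta x -> inK beta y -> x <> 0 -> y <> 0 ->
     v (x * y) = Z.add (v x) (v y)) /\
  (forall x y, inK beta x -> inK beta y -> x <> 0 -> y <> 0 -> x + y <> 0 ->
     Z.le (Z.min (v x) (v y)) (v (x + y))) /\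
  (exists x, inK beta x /\ x <> 0 /\ v x = 1%Z).

(* x_f lies in the closure of S_f in K_f = prod_{p | (beta)} K_p
   (for x in K): every basic neighbourhood {z : v_p(z - x_f) >= N, all p|(beta)}
   meets S_f. *)
Definition in_closure_f (beta : R) (S : R -> Prop) (x : R) : Prop :=
  forall N : Z, exists y, S y /\
    forall v, is_dval beta v -> Z.lt 0 (v beta) ->
      x - y = 0 \/ Z.le N (v (x - y)).

(* closure(S_f) = closure(T_f) in K_f, for S, T subsets of K; in any
   topological space this is equivalent to S_f ⊆ cl(T_f) and T_f ⊆ cl(S_f). *)
Definition same_closure_f (beta : R) (S T : R -> Prop) : Prop :=
  (forall x, S x -> in_closure_f beta T x) /\
  (forall x, T x -> in_closure_f beta S x).

Definition Zset (x : R) : Prop := exists n : Z, x = IZR n.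

Definition Zb (b : Z) (x : R) : Prop :=
  exists p q : Z, q <> 0%Z /\ Z.gcd q b = 1%Z /\ x = IZR p / IZR q.

Definition Zb_interval (b : Z) (c d : R) (x : R) : Prop :=
  Zb b x /\ c <= x <= d.

(* Every valuation v with v beta > 0 has v b >= 1, since b = beta (beta - a);
   hence integers prime to b are v-units, Z_b lies in the valuation ring, and
   b^M Z_b is v-adically within M of 0 for all such v at once.  Bezout gives
   Z_b = Z + b^M Z_b, so Z is dense in Z_b.  For the interval, the steps
   n b^M / D with D = 1 + t b (prime to b) and t large are real-small enough
   to land x + n b^M / D in [c, d] while staying in x + b^M Z_b. *)
From Stdlib Require Import Reals ZArith Znumtheory Zpow_facts Lia Lra.
Open Scope R_scope.

Definition Qset (x : R) : Prop :=
  exists p q : Z, q <> 0%Z /\ x = IZR p / IZR q.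

Lemma Qset_inK beta x : Qset x -> inK beta x.
Proof.
intros (p & q & hq & ->). exists p, 0%Z, q. split; [exact hq | now rewrite Rmult_0_l, Rplus_0_r].
Qed.

Lemma Qset_Z n : Qset (IZR n).
Proof. exists n, 1%Z. split; [lia | field]. Qed.

Lemma Qset_mul x y : Qset x -> Qset y -> Qset (x * y).
Proof.
intros (p1 & q1 & h1 & ->) (p2 & q2 & h2 & ->).
exists (p1 * p2)%Z, (q1 * q2)%Z. split; [lia |].
rewrite !mult_IZR. field. split; apply not_0_IZR; assumption.
Qed.

Lemma Qset_inv x : Qset x -> Qset (/ x).
Proof.
intros (p & q & hq & ->). destruct (Z.eq_dec p 0) as [-> | hp].
- unfold Rdiv. rewrite Rmult_0_l, Rinv_0. apply (Qset_Z 0).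
- exists q, p. split; [exact hp |]. field. split; apply not_0_IZR; assumption.
Qed.

Lemma Qset_pow x n : Qset x -> Qset (x ^ n).
Proof.
intros hx. induction n as [| n IH]; simpl.
- apply (Qset_Z 1).
- apply Qset_mul; assumption.
Qed.

Lemma Zb_Qset b x : Zb b x -> Qset x.
Proof. intros (p & q & hq & _ & ->). exists p, q. auto. Qed.

Lemma Zb_Z b n : Zb b (IZR n).
Proof. exists n, 1%Z. split; [lia |]. split; [apply Z.gcd_1_l | field]. Qed.

Lemma gcd_mul_eq1 q1 q2 b :
  Z.gcd q1 b = 1%Z -> Z.gcd q2 b = 1%Z -> Z.gcd (q1 * q2) b = 1%Z.
Proof.
rewrite !Zgcd_1_rel_prime. intros h1 h2.
apply rel_prime_sym, rel_prime_mult; apply rel_prime_sym; assumption.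
Qed.

Lemma Zb_mul b x y : Zb b x -> Zb b y -> Zb b (x * y).
Proof.
intros (p1 & q1 & h1 & g1 & ->) (p2 & q2 & h2 & g2 & ->).
exists (p1 * p2)%Z, (q1 * q2)%Z. split; [lia |]. split; [apply gcd_mul_eq1; assumption |].
rewrite !mult_IZR. field. split; apply not_0_IZR; assumption.
Qed.

Lemma Zb_add b x y : Zb b x -> Zb b y -> Zb b (x + y).
Proof.
intros (p1 & q1 & h1 & g1 & ->) (p2 & q2 & h2 & g2 & ->).
exists (p1 * q2 + p2 * q1)%Z, (q1 * q2)%Z. split; [lia |]. split; [apply gcd_mul_eq1; assumption |].
rewrite plus_IZR, !mult_IZR. field. split; apply not_0_IZR; assumption.
Qed.

Lemma Zb_pow b x n : Zb b x -> Zb b (x ^ n).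
Proof.
intros hx. induction n as [| n IH]; simpl.
- apply (Zb_Z b 1).
- apply Zb_mul; assumption.
Qed.

Lemma Zb_inv_Z b D : D <> 0%Z -> Z.gcd D b = 1%Z -> Zb b (/ IZR D).
Proof.
intros nD hD. exists 1%Z, D. split; [exact nD |]. split; [exact hD |]. field. apply not_0_IZR, nD.
Qed.

Lemma Zb_eq_Z_add_mul_pow b M x :
  Zb b x -> exists n y, Zb b y /\ x = IZR n + y * IZR b ^ M.
Proof.
intros hx. destruct hx as (p & q & hq & hg & ->).
assert (hr : rel_prime q (b ^ Z.of_nat M)).
{ apply rel_prime_Zpower_r; [lia | apply Zgcd_1_rel_prime, hg]. }
destruct (rel_prime_bezout _ _ hr) as [u w e].
exists (p * u)%Z, (IZR p / IZR q * IZR w). split.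
- apply Zb_mul; [exists p, q; auto | apply Zb_Z].
- assert (e' : IZR u * IZR q + IZR w * IZR b ^ M = 1).
  { rewrite pow_IZR, <- !mult_IZR, <- plus_IZR, e. reflexivity. }
  rewrite mult_IZR. apply not_0_IZR in hq.
  field_simplify_eq; [| exact hq].
  transitivity (IZR p * (IZR u * IZR q + IZR w * IZR b ^ M)); [rewrite e'; ring | ring].
Qed.

Lemma exists_Zb_mul_pow_lt b M eps :
  (0 < b)%Z -> 0 < eps -> exists y, Zb b y /\ 0 < y * IZR b ^ M < eps.
Proof.
intros hb heps.
set (r := IZR b ^ M / eps).
set (t := up r).
set (D := (1 + t * b)%Z).
assert (hbR : 1 <= IZR b) by (apply IZR_le; lia).
assert (hbM : 0 < IZR b ^ M) by (apply pow_lt; lra).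
assert (hr : 0 < r) by (apply Rdiv_lt_0_compat; assumption).
destruct (archimed r) as [ht _]. fold t in ht.
assert (ht1 : (1 <= t)%Z) by (cut (0 < t)%Z; [lia | apply lt_IZR; lra]).
assert (hD : r < IZR D).
{ unfold D. rewrite plus_IZR, mult_IZR. apply IZR_le in ht1. nra. }
exists (/ IZR D). split.
- apply Zb_inv_Z; [unfold D; nia |]. unfold D.
  rewrite Z.gcd_comm, Z.gcd_add_mult_diag_r. apply Z.gcd_1_r.
- assert (hD0 : 0 < IZR D) by lra.
  split.
  + apply Rmult_lt_0_compat; [apply Rinv_0_lt_compat |]; assumption.
  + apply (Rmult_lt_reg_r (IZR D)); [exact hD0 |].
    replace (/ IZR D * IZR b ^ M * IZR D) with (IZR b ^ M) by (field; lra).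
    replace (IZR b ^ M) with (r * eps) by (unfold r; field; lra). nra.
Qed.

Lemma exists_int_mul_in_interval c d x s :
  0 < s -> s < d - c -> exists n : Z, c <= x + IZR n * s <= d.
Proof.
intros hs hsd. set (q := (c - x) / s).
assert (hq : c - x = q * s) by (unfold q; field; lra).
destruct (archimed q) as [h1 h2].
exists (up q). split; nra.
Qed.

Section Valuation.

Variables (beta : R) (v : R -> Z).
Hypothesis hv : is_dval beta v.

Lemma dval_mul x y : Qset x -> Qset y -> x <> 0 -> y <> 0 -> v (x * y) = (v x + v y)%Z.
Proof. intros hx hy. apply hv; apply Qset_inK; assumption. Qed.

Lemma dval_add x y : Qset x -> Qset y -> x <> 0 -> y <> 0 -> x + y <> 0 ->
  (Z.min (v x) (v y) <= v (x + y))%Z.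
Proof. intros hx hy. apply hv; apply Qset_inK; assumption. Qed.

Lemma dval_1 : v 1 = 0%Z.
Proof.
pose proof (dval_mul 1 1 (Qset_Z 1) (Qset_Z 1) R1_neq_R0 R1_neq_R0) as e.
rewrite Rmult_1_r in e. lia.
Qed.

Lemma dval_opp x : Qset x -> x <> 0 -> v (- x) = v x.
Proof.
intros hx nx. assert (nm1 : -1 <> 0) by lra.
assert (vm1 : v (-1) = 0%Z).
{ pose proof (dval_mul (-1) (-1) (Qset_Z (-1)) (Qset_Z (-1)) nm1 nm1) as e.
  replace (-1 * -1) with 1 in e by ring. rewrite dval_1 in e. lia. }
replace (- x) with (-1 * x) by ring.
rewrite (dval_mul (-1) x (Qset_Z (-1)) hx nm1 nx), vm1. reflexivity.
Qed.

Lemma dval_int_nonneg n : n <> 0%Z -> (0 <= v (IZR n))%Z.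
Proof.
assert (hpos : forall m, (0 <= m)%Z -> (0 <= v (IZR (m + 1)))%Z).
{ apply natlike_ind; [change (0 + 1)%Z with 1%Z; rewrite dval_1; lia |].
  intros m hm IH. replace (Z.succ m + 1)%Z with (m + 1 + 1)%Z by lia.
  assert (h0 : 0 < IZR (m + 1)) by (apply IZR_lt; lia).
  rewrite plus_IZR with (n := (m + 1)%Z).
  pose proof (dval_add _ 1 (Qset_Z (m + 1)) (Qset_Z 1) ltac:(lra) R1_neq_R0 ltac:(lra)).
  rewrite dval_1 in H. lia. }
intros nn. destruct (Z_lt_le_dec 0 n) as [hn | hn].
- replace n with (n - 1 + 1)%Z by lia. apply hpos. lia.
- replace (IZR n) with (- IZR (- n)) by (rewrite opp_IZR; ring).
  rewrite dval_opp; [| apply Qset_Z | apply not_0_IZR; lia].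
  replace (- n)%Z with (- n - 1 + 1)%Z by lia. apply hpos. lia.
Qed.

Lemma dval_inv x : Qset x -> x <> 0 -> v (/ x) = (- v x)%Z.
Proof.
intros hx nx.
pose proof (dval_mul x (/ x) hx (Qset_inv _ hx) nx (Rinv_neq_0_compat _ nx)) as e.
rewrite Rinv_r, dval_1 in e; [lia | exact nx].
Qed.

Lemma dval_pow x n : Qset x -> x <> 0 -> v (x ^ n) = (Z.of_nat n * v x)%Z.
Proof.
intros hx nx. induction n as [| n IH].
- apply dval_1.
- change (x ^ S n) with (x * x ^ n).
  rewrite Nat2Z.inj_succ, dval_mul, IH;
    [lia | exact hx | apply Qset_pow, hx | exact nx | apply pow_nonzero, nx].
Qed.

Definition vpos_int (n : Z) : Prop := n = 0%Z \/ (1 <= v (IZR n))%Z.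

Lemma vpos_int_mul k n : vpos_int n -> vpos_int (k * n).
Proof.
intros [-> | hn]; [left; lia |].
destruct (Z.eq_dec k 0) as [-> | nk]; [left; lia |].
destruct (Z.eq_dec n 0) as [-> | nn]; [left; lia |]. right.
rewrite mult_IZR, dval_mul; try apply Qset_Z; try (apply not_0_IZR; assumption).
pose proof (dval_int_nonneg k nk). lia.
Qed.

Lemma vpos_int_add m n : vpos_int m -> vpos_int n -> vpos_int (m + n).
Proof.
intros hm hn.
destruct (Z.eq_dec m 0) as [-> | nm]; [exact hn |].
destruct (Z.eq_dec n 0) as [-> | nn]; [rewrite Z.add_0_r; exact hm |].
destruct hm as [? | hm]; [contradiction |]. destruct hn as [? | hn]; [contradiction |].
destruct (Z.eq_dec (m + n) 0) as [e | ne]; [left; exact e | right].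
rewrite plus_IZR in *.
pose proof (dval_add _ _ (Qset_Z m) (Qset_Z n) (not_0_IZR _ nm) (not_0_IZR _ nn)
  ltac:(rewrite <- plus_IZR; apply not_0_IZR, ne)).
lia.
Qed.

Lemma dval_int_coprime b m : (1 <= v (IZR b))%Z -> Z.gcd m b = 1%Z -> m <> 0%Z ->
  v (IZR m) = 0%Z.
Proof.
intros hb hg nm.
destruct (Z.eq_dec (v (IZR m)) 0) as [e | ne]; [exact e | exfalso].
apply Zgcd_1_rel_prime, rel_prime_bezout in hg. destruct hg as [u w e].
assert (h1 : vpos_int 1).
{ rewrite <- e. apply vpos_int_add; apply vpos_int_mul; right; [| exact hb].
  pose proof (dval_int_nonneg m nm). lia. }
destruct h1 as [h1 | h1]; [lia | rewrite dval_1 in h1; lia].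
Qed.

Lemma dval_Zb_nonneg b y : (1 <= v (IZR b))%Z -> Zb b y -> y <> 0 -> (0 <= v y)%Z.
Proof.
intros hb (p & q & hq & hg & ->) ny.
assert (np : p <> 0%Z) by (intros ->; apply ny; unfold Rdiv; ring).
unfold Rdiv. rewrite dval_mul, dval_inv, (dval_int_coprime b q hb hg hq);
  try apply Qset_Z; try apply Qset_inv, Qset_Z;
  try apply Rinv_neq_0_compat; try (apply not_0_IZR; assumption).
pose proof (dval_int_nonneg p np). lia.
Qed.

(* [b = beta (beta - a)] and [v (beta - a) >= 0]. *)
Lemma dval_pos_b a b : beta ^ 2 = IZR a * beta + IZR b -> b <> 0%Z ->
  (0 < v beta)%Z -> (1 <= v (IZR b))%Z.
Proof.
intros hbeta nb hvb. destruct hv as [hmul [hadd _]].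
assert (e : beta * (beta + IZR (- a)) = IZR b).
{ rewrite opp_IZR. replace (IZR b) with (beta ^ 2 - IZR a * beta) by lra. ring. }
assert (nb' : IZR b <> 0) by (apply not_0_IZR, nb).
assert (n1 : beta <> 0) by (intros h0; apply nb'; rewrite <- e, h0; ring).
assert (n2 : beta + IZR (- a) <> 0) by (intros h0; apply nb'; rewrite <- e, h0; ring).
assert (kb : inK beta beta).
{ exists 0%Z, 1%Z, 1%Z. split; [lia | field]. }
assert (ka : inK beta (IZR (- a))) by apply Qset_inK, Qset_Z.
assert (kba : inK beta (beta + IZR (- a))).
{ exists (- a)%Z, 1%Z, 1%Z. split; [lia | field]. }
assert (hba : (0 <= v (beta + IZR (- a)))%Z).
{ destruct (Z.eq_dec a 0) as [-> | na].
  - rewrite Rplus_0_r. lia.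
  - pose proof (hadd _ _ kb ka n1 (not_0_IZR (- a) ltac:(lia)) n2).
    pose proof (dval_int_nonneg (- a) ltac:(lia)). lia. }
pose proof (hmul _ _ kb kba n1 n2) as h. rewrite e in h. lia.
Qed.

End Valuation.

Definition small_f (beta : R) (N : Z) (z : R) : Prop :=
  forall v, is_dval beta v -> (0 < v beta)%Z -> z = 0 \/ (N <= v z)%Z.

Lemma in_closure_f_self beta (S : R -> Prop) x : S x -> in_closure_f beta S x.
Proof. intros hx N. exists x. split; [exact hx |]. intros; left; ring. Qed.

Section Closure.

Variables (a b : Z) (beta : R).
Hypothesis hbeta : beta ^ 2 = IZR a * beta + IZR b.
Hypothesis hb : (0 < b)%Z.

Lemma Zb_mul_pow_small y N M :
  Zb b y -> (N <= Z.of_nat M)%Z -> small_f beta N (y * IZR b ^ M).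
Proof.
intros hy hNM v hv hvb.
destruct (Req_dec y 0) as [-> | ny]; [left; ring | right].
assert (hvb' : (1 <= v (IZR b))%Z) by (apply (dval_pos_b beta v hv a); auto; lia).
assert (nb : IZR b <> 0) by (apply not_0_IZR; lia).
rewrite (dval_mul beta v hv), (dval_pow beta v hv); try assumption;
  try apply Qset_pow; try apply Qset_Z; try apply (Zb_Qset b), hy; try apply pow_nonzero, nb.
pose proof (dval_Zb_nonneg beta v hv b y hvb' hy ny). nia.
Qed.

Lemma Zb_in_closure_Z x : Zb b x -> in_closure_f beta Zset x.
Proof.
intros hx N.
destruct (Zb_eq_Z_add_mul_pow b (Z.to_nat N) x hx) as (n & y & hy & ->).
exists (IZR n). split; [exists n; reflexivity |].
replace (IZR n + y * IZR b ^ Z.to_nat N - IZR n) with (y * IZR b ^ Z.to_nat N) by ring.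
apply Zb_mul_pow_small; [exact hy | lia].
Qed.

Lemma Zb_in_closure_interval c d x :
  c < d -> Zb b x -> in_closure_f beta (Zb_interval b c d) x.
Proof.
intros hcd hx N. set (M := Z.to_nat N).
destruct (exists_Zb_mul_pow_lt b M (d - c) hb ltac:(lra)) as (y & hy & hs).
destruct (exists_int_mul_in_interval c d x (y * IZR b ^ M)) as [n hn]; try lra.
exists (x + IZR n * (y * IZR b ^ M)). split.
- split; [| exact hn].
  apply Zb_add; [exact hx |].
  apply Zb_mul; [apply Zb_Z | apply Zb_mul; [exact hy | apply Zb_pow, Zb_Z]].
- replace (x - (x + IZR n * (y * IZR b ^ M))) with (IZR (- n) * y * IZR b ^ M)
    by (rewrite opp_IZR; ring).
  apply Zb_mul_pow_small; [apply Zb_mul; [apply Zb_Z | exact hy] | unfold M; lia].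
Qed.

End Closure.

Theorem lemma3 (a b : Z) (beta c d : R)
  (hb : (2 <= b)%Z) (hab : (b <= a)%Z)
  (hbeta1 : 1 < beta) (hbeta : beta ^ 2 = IZR a * beta + IZR b)
  (hcd : c < d) :
  same_closure_f beta Zset (Zb b) /\
  same_closure_f beta (Zb b) (Zb_interval b c d).
Proof.
assert (hb0 : (0 < b)%Z) by lia.
split; split.
- intros x [n ->]. apply in_closure_f_self, Zb_Z.
- apply (Zb_in_closure_Z a b beta hbeta hb0).
- intros x. apply (Zb_in_closure_interval a b beta hbeta hb0 c d x hcd).
- intros x [hx _]. apply in_closure_f_self, hx.
Qed.
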